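(* Define a relation $\sim$ on $\mathbb{G}$ by declaring $(s,p)\sim(t,q)$ if and only if there exists $\varphi\in \mathrm{Aut}(\mathbb{D})$ with $H_\varphi(s,p)=(t,q)$. Then $\sim$ is an equivalence relation on $\mathbb{G}$. Moreover, writing $[(s,p)]$ for the equivalence class of $(s,p)\in\mathbb{G}$, the set of equivalence classes is $\{[(a,0)] : a\in[0,1)\}$.
   Context: $\mathbb{D}$ is the open unit disc in $\mathbb{C}$ and $\mathrm{Aut}(\mathbb{D})$ its group of holomorphic automorphisms. The symmetrized bidisc is $\mathbb{G}=\{(z_1+z_2,z_1z_2): z_1,z_2\in\mathbb{D}\}\subset\mathbb{C}^2$. For $\varphi\in\mathrm{Aut}(\mathbb{D})$, $H_\varphi:\mathbb{G}\to\mathbb{G}$ is defined by $H_\varphi(z_1+z_2,z_1z_2)=(\varphi(z_1)+\varphi(z_2),\varphi(z_1)\varphi(z_2))$. Note $(a,0)\in\mathbb{G}$ for every $a\in[0,1)$. *)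

From Stdlib Require Import Reals.
From Coquelicot Require Import Coquelicot.
Open Scope R_scope.

Definition in_disc (z : C) : Prop := Cmod z < 1.

Definition holo_at (f : C -> C) (z : C) : Prop :=
  @ex_derive C_AbsRing C_NormedModule f z.

(* phi is a holomorphic automorphism of D: a holomorphic bijection of D onto D
   with holomorphic inverse (functions are C -> C, only their values on D matter). *)
Definition is_aut_disc (phi : C -> C) : Prop :=
  (forall z, in_disc z -> in_disc (phi z) /\ holo_at phi z) /\
  exists psi : C -> C,
    (forall z, in_disc z -> in_disc (psi z) /\ holo_at psi z) /\
    (forall z, in_disc z -> psi (phi z) = z) /\
    (forall z, in_disc z -> phi (psi z) = z).

Definition in_G (x : C * C) : Prop :=
  exists z1 z2 : C, in_disc z1 /\ in_disc z2 /\
    x = (Cplus z1 z2, Cmult z1 z2).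

(* H_phi (s,p) = (t,q), unfolded through the definition
   H_phi(z1+z2, z1 z2) = (phi z1 + phi z2, phi z1 phi z2). *)
Definition H_maps (phi : C -> C) (x y : C * C) : Prop :=
  exists z1 z2 : C, in_disc z1 /\ in_disc z2 /\
    x = (Cplus z1 z2, Cmult z1 z2) /\
    y = (Cplus (phi z1) (phi z2), Cmult (phi z1) (phi z2)).

Definition sim (x y : C * C) : Prop :=
  exists phi, is_aut_disc phi /\ H_maps phi x y.

Definition equiv_on (A : C * C -> Prop) (r : C * C -> C * C -> Prop) : Prop :=
  (forall x, A x -> r x x) /\
  (forall x y, A x -> A y -> r x y -> r y x) /\
  (forall x y z, A x -> A y -> A z -> r x y -> r y z -> r x z).

Definition sim_class (x : C * C) : C * C -> Prop :=
  fun y => in_G y /\ sim x y.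

Definition pt_a0 (a : R) : C * C := (RtoC a, RtoC 0).

From Stdlib Require Import Reals Lra Psatz Classical FunctionalExtensionality PropExtensionality.
From Coquelicot Require Import Coquelicot.
Open Scope R_scope.

(** The holomorphic automorphisms of the disc form a group, and since the
    symmetric functions [z1 + z2], [z1 z2] determine the unordered pair
    [{z1, z2}], the maps [H_phi] compose and invert along with [phi]; hence
    [~] is an equivalence relation.  Given [(z1 + z2, z1 z2)], the Möbius map
    [z |-> (z - z2) / (1 - conj z2 z)] sends [z2] to [0], and a rotation then
    moves the image of [z1] to [a = |(z1 - z2) / (1 - conj z2 z1)|] in [[0, 1)];
    so every class is the class of some [(a, 0)]. *)

(** Coquelicot equips [C] with two normed-module structures that agree but are
    not convertible: [holo_at] uses [C_NormedModule], while the generic calculus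
    lemmas over an [AbsRing] produce [AbsRing_NormedModule C_AbsRing]. *)
Lemma is_derive_C_iff (f : C -> C) (z l : C) :
  @is_derive C_AbsRing (AbsRing_NormedModule C_AbsRing) f z l <->
  @is_derive C_AbsRing C_NormedModule f z l.
Proof.
split; intros [[Hplus Hscal [M [HM Hbound]]] Hlim];
  (split; [constructor; [exact Hplus | exact Hscal | now exists M] | exact Hlim]).
Qed.

Lemma holo_at_iff (f : C -> C) (z : C) :
  @ex_derive C_AbsRing (AbsRing_NormedModule C_AbsRing) f z <-> holo_at f z.
Proof. split; intros [l Hl]; exists l; apply is_derive_C_iff, Hl. Qed.

Lemma Cinv_expansion (z w : C) : z <> 0%C -> w <> 0%C ->
  (/ w - / z - (w - z) * - / (z * z) = (w - z) * (w - z) / (w * (z * z)))%C.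
Proof. intros Hz Hw. field. auto. Qed.

Lemma is_derive_Cinv (z : C) : z <> 0%C ->
  @is_derive C_AbsRing C_NormedModule Cinv z (- / (z * z))%C.
Proof.
intros Hz. split; [apply is_linear_scal_l |].
intros x Hx eps.
pose proof (@is_filter_lim_locally_unique C_AbsRing (AbsRing_NormedModule C_AbsRing) z x Hx) as <-.
apply (@locally_norm_le_locally C_AbsRing (AbsRing_NormedModule C_AbsRing)).
(* For [|w - z| < |z|/2] we get [|w| > |z|/2], so the remainder given by
   [Cinv_expansion] is at most [2 |w - z|^2 / |z|^3]. *)
set (r := Cmod z).
assert (Hr : 0 < r) by (apply Cmod_gt_0; exact Hz).
pose proof (cond_pos eps) as Heps.
assert (Hdelta : 0 < Rmin (r / 2) (eps * (r * r * r) / 2)).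
{ apply Rmin_pos; [lra |]. assert (0 < r * r * r) by (repeat apply Rmult_lt_0_compat; exact Hr). nra. }
exists (mkposreal _ Hdelta). intros w Hw. unfold ball_norm in Hw. simpl in Hw.
change (norm (minus w z)) with (Cmod (w - z)%C) in Hw.
change (Cmod (/ w - / z - (w - z) * - / (z * z))%C <= eps * Cmod (w - z)%C).
set (d := Cmod (w - z)%C) in *.
assert (Hd1 : d < r / 2) by (eapply Rlt_le_trans; [exact Hw | apply Rmin_l]).
assert (Hd2 : d < eps * (r * r * r) / 2) by (eapply Rlt_le_trans; [exact Hw | apply Rmin_r]).
assert (Hwr : r / 2 < Cmod w).
{ assert (r <= Cmod w + d).
  { unfold r, d. replace z with (w + - (w - z))%C at 1 by ring.
    rewrite <- (Cmod_opp (w - z)%C). apply Cmod_triangle. }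
  lra. }
assert (Hw0 : (w : C) <> RtoC 0) by (intros ->; rewrite Cmod_0 in Hwr; lra).
rewrite Cinv_expansion, Cmod_div, !Cmod_mult by auto using Cmult_neq_0.
fold d r.
pose proof (Cmod_ge_0 (w - z)%C) as Hd0. fold d in Hd0.
apply Rle_div_l; [pose proof (Rmult_lt_0_compat _ _ Hr Hr); nra |].
assert (Hgrowth : eps * (r * r * r) / 2 <= eps * (Cmod w * (r * r))).
{ assert (0 <= eps * (r * r)) by (pose proof (Rmult_lt_0_compat _ _ Hr Hr); nra). nra. }
replace (eps * d * (Cmod w * (r * r))) with (d * (eps * (Cmod w * (r * r)))) by ring.
apply Rmult_le_compat_l; lra.
Qed.

Lemma holo_at_id (z : C) : holo_at (fun t => t) z.
Proof. apply holo_at_iff, ex_derive_id. Qed.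

Lemma holo_at_const (c z : C) : holo_at (fun _ => c) z.
Proof. apply ex_derive_const. Qed.

Lemma holo_at_minus (f g : C -> C) (z : C) :
  holo_at f z -> holo_at g z -> holo_at (fun t => (f t - g t)%C) z.
Proof. apply (@ex_derive_minus C_AbsRing C_NormedModule f g). Qed.

Lemma holo_at_mult (f g : C -> C) (z : C) :
  holo_at f z -> holo_at g z -> holo_at (fun t => (f t * g t)%C) z.
Proof.
intros [df Hf] [dg Hg]. apply holo_at_iff. eexists.
apply (@is_derive_mult C_AbsRing); [apply is_derive_C_iff, Hf | apply is_derive_C_iff, Hg |].
intros; apply Cmult_comm.
Qed.

Lemma holo_at_comp (f g : C -> C) (z : C) :
  holo_at g z -> holo_at f (g z) -> holo_at (fun t => f (g t)) z.
Proof. intros Hg Hf. apply ex_derive_comp; [exact Hf | apply holo_at_iff, Hg]. Qed.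

Lemma holo_at_inv (f : C -> C) (z : C) :
  holo_at f z -> f z <> 0%C -> holo_at (fun t => / f t)%C z.
Proof.
intros Hf Hfz. apply (holo_at_comp Cinv f); [exact Hf |].
eexists. apply is_derive_Cinv, Hfz.
Qed.

Lemma is_aut_disc_id : is_aut_disc (fun z => z).
Proof.
split; [intros z Hz; split; [exact Hz | apply holo_at_id] |].
exists (fun z => z). repeat split; auto using holo_at_id.
Qed.

Lemma is_aut_disc_comp (f g : C -> C) :
  is_aut_disc f -> is_aut_disc g -> is_aut_disc (fun z => g (f z)).
Proof.
intros [Hf [f' [Hf' [Hf'f Hff']]]] [Hg [g' [Hg' [Hg'g Hgg']]]].
split.
- intros z Hz. destruct (Hf z Hz) as [Hfz Hfh]. destruct (Hg _ Hfz) as [Hgz Hgh].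
  split; [exact Hgz | apply holo_at_comp; assumption].
- exists (fun z => f' (g' z)). split; [| split].
  + intros z Hz. destruct (Hg' z Hz) as [Hgz Hgh]. destruct (Hf' _ Hgz) as [Hfz Hfh].
    split; [exact Hfz | apply holo_at_comp; assumption].
  + intros z Hz. rewrite Hg'g by apply Hf, Hz. apply Hf'f, Hz.
  + intros z Hz. rewrite Hff' by apply Hg', Hz. apply Hgg', Hz.
Qed.

Lemma is_aut_disc_inverse (f : C -> C) : is_aut_disc f ->
  exists g, is_aut_disc g /\ forall z, in_disc z -> g (f z) = z.
Proof.
intros [Hf [g [Hg [Hgf Hfg]]]]. exists g. split; [| exact Hgf].
split; [exact Hg |]. exists f. split; [exact Hf | split; assumption].
Qed.

Lemma is_aut_disc_rotation (l : C) : Cmod l = 1 -> is_aut_disc (fun z => l * z)%C.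
Proof.
intros Hl.
assert (Hll : (Cconj l * l = 1)%C).
{ rewrite Cmult_comm, <- Cmod2_conj, Hl. apply injective_projections; simpl; ring. }
assert (Hrot : forall m z, Cmod m = 1 -> in_disc z -> in_disc (m * z)%C /\ holo_at (fun t => m * t)%C z).
{ intros m z Hm Hz. unfold in_disc in *. rewrite Cmod_mult, Hm, Rmult_1_l.
  split; [exact Hz | apply holo_at_mult; [apply holo_at_const | apply holo_at_id]]. }
split; [intros z; apply Hrot, Hl |].
exists (fun z => Cconj l * z)%C. split; [| split].
- intros z. apply Hrot. rewrite Cmod_conj. exact Hl.
- intros z _. rewrite Cmult_assoc, Hll. apply Cmult_1_l.
- intros z _. rewrite Cmult_assoc, (Cmult_comm l), Hll. apply Cmult_1_l.
Qed.

Definition mobius (b z : C) : C := ((z - b) / (1 - Cconj b * z))%C.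

Lemma mobius_gap (b z : C) :
  Cmod (1 - Cconj b * z)%C ^ 2 - Cmod (z - b)%C ^ 2 = (1 - Cmod b ^ 2) * (1 - Cmod z ^ 2).
Proof. rewrite !Cmod2_alt. destruct b, z. simpl. ring. Qed.

Lemma Cmod_lt_1_sq (z : C) : Cmod z < 1 <-> Cmod z ^ 2 < 1.
Proof.
pose proof (Cmod_ge_0 z). split; intro Hlt; [nra |].
apply Rnot_le_lt. intro. nra.
Qed.

Lemma mobius_denom_neq0 (b z : C) :
  in_disc b -> in_disc z -> (1 - Cconj b * z)%C <> 0%C.
Proof.
intros Hb Hz E. pose proof (mobius_gap b z) as Hgap.
rewrite E, Cmod_0 in Hgap. apply Cmod_lt_1_sq in Hb, Hz.
pose proof (pow2_ge_0 (Cmod (z - b)%C)). nra.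
Qed.

Lemma mobius_in_disc (b z : C) : in_disc b -> in_disc z -> in_disc (mobius b z).
Proof.
intros Hb Hz. pose proof (mobius_denom_neq0 b z Hb Hz) as Hden.
pose proof (mobius_gap b z) as Hgap.
unfold in_disc, mobius in *. apply Cmod_lt_1_sq in Hb, Hz.
rewrite Cmod_div by exact Hden.
assert (Hpos : 0 < Cmod (1 - Cconj b * z)%C) by (apply Cmod_gt_0; exact Hden).
apply Rlt_div_l; [exact Hpos |]. rewrite Rmult_1_l.
assert (0 < (1 - Cmod b ^ 2) * (1 - Cmod z ^ 2)) by (apply Rmult_lt_0_compat; lra).
pose proof (Cmod_ge_0 (z - b)%C). nra.
Qed.

Lemma mobius_self (b : C) : mobius b b = 0%C.
Proof. unfold mobius, Cdiv. replace (b - b)%C with (RtoC 0) by ring. apply Cmult_0_l. Qed.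

Lemma mobius_opp_mobius (b z : C) :
  in_disc b -> in_disc z -> mobius (- b) (mobius b z) = z.
Proof.
intros Hb Hz. pose proof (mobius_denom_neq0 b z Hb Hz) as Hden.
pose proof (mobius_denom_neq0 b b Hb Hb) as Hden_b.
unfold mobius. rewrite Copp_conj. field. split; [exact Hden |].
intro E. apply Hden_b. rewrite <- E. ring.
Qed.

Lemma holo_at_mobius (b z : C) : in_disc b -> in_disc z -> holo_at (mobius b) z.
Proof.
intros Hb Hz. apply holo_at_mult.
- apply holo_at_minus; [apply holo_at_id | apply holo_at_const].
- apply holo_at_inv; [| exact (mobius_denom_neq0 b z Hb Hz)].
  apply holo_at_minus; [apply holo_at_const |].
  apply holo_at_mult; [apply holo_at_const | apply holo_at_id].
Qed.

Lemma is_aut_disc_mobius (b : C) : in_disc b -> is_aut_disc (mobius b).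
Proof.
intros Hb. assert (Hb' : in_disc (- b)%C) by (unfold in_disc; rewrite Cmod_opp; exact Hb).
assert (Hmap : forall c z, in_disc c -> in_disc z -> in_disc (mobius c z) /\ holo_at (mobius c) z)
  by (split; [apply mobius_in_disc | apply holo_at_mobius]; assumption).
split; [intros z; apply Hmap, Hb |].
exists (mobius (- b)). split; [| split].
- intros z. apply Hmap, Hb'.
- intros z. apply mobius_opp_mobius, Hb.
- intros z Hz. pose proof (mobius_opp_mobius (- b) z Hb' Hz) as Hinv.
  replace (- - b)%C with b in Hinv by ring. exact Hinv.
Qed.

Definition sym_pair (z1 z2 : C) : C * C := (z1 + z2, z1 * z2)%C.

Lemma sym_pair_eq (u1 u2 w1 w2 : C) : sym_pair u1 u2 = sym_pair w1 w2 ->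
  (w1 = u1 /\ w2 = u2) \/ (w1 = u2 /\ w2 = u1).
Proof.
intros E. unfold sym_pair in E.
pose proof (f_equal fst E) as Hsum. pose proof (f_equal snd E) as Hprod.
cbn [fst snd] in Hsum, Hprod.
assert (Hw2 : w2 = (u1 + u2 - w1)%C) by (rewrite Hsum; ring).
assert (Hroot : ((w1 - u1) * (w1 - u2))%C = 0%C).
{ transitivity (w1 * w1 - w1 * (u1 + u2) + u1 * u2)%C; [ring |].
  rewrite Hsum, Hprod. ring. }
destruct (classic (w1 = u1)) as [-> | Hne1]; [left; split; [reflexivity | rewrite Hw2; ring] |].
destruct (classic (w1 = u2)) as [-> | Hne2]; [right; split; [reflexivity | rewrite Hw2; ring] |].
exfalso. revert Hroot. apply Cmult_neq_0; apply Cminus_eq_contra; assumption.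
Qed.

Lemma sym_pair_map (f : C -> C) (u1 u2 w1 w2 : C) : sym_pair u1 u2 = sym_pair w1 w2 ->
  sym_pair (f u1) (f u2) = sym_pair (f w1) (f w2).
Proof.
intros E. destruct (sym_pair_eq _ _ _ _ E) as [[-> ->] | [-> ->]]; [reflexivity |].
unfold sym_pair. f_equal; ring.
Qed.

Lemma sim_sym (x y : C * C) : sim x y -> sim y x.
Proof.
intros [phi [Hphi [z1 [z2 [Hz1 [Hz2 [-> ->]]]]]]].
destruct (is_aut_disc_inverse phi Hphi) as [psi [Hpsi Hpsi_phi]].
exists psi. split; [exact Hpsi |].
exists (phi z1), (phi z2). destruct Hphi as [Hmaps _].
split; [apply Hmaps, Hz1 | split; [apply Hmaps, Hz2 | split; [reflexivity |]]].
rewrite !Hpsi_phi by assumption. reflexivity.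
Qed.

Lemma sim_trans (x y z : C * C) : sim x y -> sim y z -> sim x z.
Proof.
intros [phi [Hphi [u1 [u2 [Hu1 [Hu2 [Ex Ey]]]]]]] [chi [Hchi [w1 [w2 [_ [_ [Ey' Ez]]]]]]].
exists (fun t => chi (phi t)). split; [apply is_aut_disc_comp; assumption |].
exists u1, u2. do 3 (split; [assumption |]).
rewrite Ez. apply (sym_pair_map chi). unfold sym_pair. rewrite <- Ey, Ey'. reflexivity.
Qed.

Lemma sim_refl (x : C * C) : in_G x -> sim x x.
Proof.
intros [z1 [z2 [Hz1 [Hz2 Ex]]]]. exists (fun z => z).
split; [exact is_aut_disc_id | exists z1, z2; auto].
Qed.

Lemma sim_class_eq (x y : C * C) : sim x y -> sim_class x = sim_class y.
Proof.
intros Hxy. apply functional_extensionality. intros v. apply propositional_extensionality.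
unfold sim_class. split; intros [Hv Hsim]; split; try exact Hv.
- exact (sim_trans _ _ _ (sim_sym _ _ Hxy) Hsim).
- exact (sim_trans _ _ _ Hxy Hsim).
Qed.

Lemma rotation_to_modulus (w : C) : exists l : C, Cmod l = 1 /\ (l * w)%C = RtoC (Cmod w).
Proof.
destruct (classic (w = 0%C)) as [-> | Hw].
- exists (RtoC 1). rewrite Cmod_1, Cmod_0. split; [reflexivity | ring].
- assert (Hm : 0 < Cmod w) by (apply Cmod_gt_0; exact Hw).
  assert (HmC : RtoC (Cmod w) <> 0%C) by (intros E; apply RtoC_inj in E; lra).
  exists (Cconj w / Cmod w)%C. split.
  + rewrite Cmod_div, Cmod_conj, Cmod_R, Rabs_pos_eq by (auto; lra). field. lra.
  + assert (Hsq : (Cconj w * w)%C = (Cmod w * Cmod w)%C).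
    { rewrite Cmult_comm, <- Cmod2_conj. apply injective_projections; simpl; ring. }
    transitivity ((Cconj w * w) / Cmod w)%C; [field; exact HmC |].
    rewrite Hsq. field. exact HmC.
Qed.

Lemma sim_normal_form (z1 z2 : C) : in_disc z1 -> in_disc z2 ->
  exists a, 0 <= a < 1 /\ sim (sym_pair z1 z2) (pt_a0 a).
Proof.
intros Hz1 Hz2.
destruct (rotation_to_modulus (mobius z2 z1)) as [l [Hl Hlw]].
exists (Cmod (mobius z2 z1)).
split; [split; [apply Cmod_ge_0 | apply mobius_in_disc; assumption] |].
exists (fun t => l * mobius z2 t)%C.
split.
{ apply (is_aut_disc_comp (mobius z2) (fun u => l * u)%C);
    [apply is_aut_disc_mobius | apply is_aut_disc_rotation]; assumption. }
exists z1, z2. split; [exact Hz1 | split; [exact Hz2 | split; [reflexivity |]]].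
rewrite Hlw, mobius_self. unfold pt_a0. f_equal; ring.
Qed.

Lemma in_G_pt_a0 (a : R) : 0 <= a < 1 -> in_G (pt_a0 a).
Proof.
intros Ha. exists (RtoC a), (RtoC 0). unfold in_disc.
rewrite Cmod_R, Cmod_0, Rabs_pos_eq by lra.
split; [lra | split; [lra |]]. unfold pt_a0. f_equal; ring.
Qed.

Theorem theorem2p1 :
  equiv_on in_G sim /\
  (forall S : C * C -> Prop,
     (exists x, in_G x /\ S = sim_class x) <->
     (exists a : R, 0 <= a < 1 /\ S = sim_class (pt_a0 a))).
Proof.
split; [split; [| split] |].
- exact sim_refl.
- intros x y _ _. apply sim_sym.
- intros x y z _ _ _. apply sim_trans.
- intros S. split.
  + intros [x [[z1 [z2 [Hz1 [Hz2 ->]]]] ->]].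
    destruct (sim_normal_form z1 z2 Hz1 Hz2) as [a [Ha Hsim]].
    exists a. split; [exact Ha | apply sim_class_eq, Hsim].
  + intros [a [Ha ->]]. exists (pt_a0 a). split; [apply in_G_pt_a0, Ha | reflexivity].
Qed.
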